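(* For each $X\in\{\mathrm{B_{ii}},\mathrm{B_{vi}},\mathrm{H_{ii}},\mathrm{H_{iii}}\}$, let $G_X$ be the group with generators $a,b,c$ and relations $\mathrm{B_{ii}}$: $ababab=bababa,\ bc=ab,\ ac=ca$; $\mathrm{B_{vi}}$: $aba=bab,\ aca=bac,\ acaca=cacac$; $\mathrm{H_{ii}}$: $abab=baba,\ aca=bac,\ acaca=cacac$; $\mathrm{H_{iii}}$: $aba=bab,\ bcba=cbac,\ cba=acb$; and let $G_X^+$ be the submonoid of $G_X$ generated by $a,b,c$. Then $G_X^+$ is not a Gaussian monoid; hence it is neither an Artin monoid nor a Garside monoid.
   Context: A monoid is Gaussian if it is atomic, cancellative, and admits the (left and right) divisibility theory, i.e. any two elements have a left least common multiple and a right least common multiple with respect to left/right divisibility ($U|_lV$ iff $V=UW$, $U|_rV$ iff $V=WU$ for some $W$). *)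

From Stdlib Require Import List.
Import ListNotations.

Section Gaussian.
Variables (M : Type) (eqv : M -> M -> Prop) (mul : M -> M -> M) (one : M).

Definition ldiv (U V : M) : Prop := exists W, eqv V (mul U W).
Definition rdiv (U V : M) : Prop := exists W, eqv V (mul W U).

Definition cancellative : Prop :=
  (forall U V W, eqv (mul U V) (mul U W) -> eqv V W) /\
  (forall U V W, eqv (mul V U) (mul W U) -> eqv V W).

Fixpoint prodl (l : list M) : M :=
  match l with [] => one | x :: l' => mul x (prodl l') end.

Definition atomic : Prop :=
  forall x, exists N : nat, forall l : list M,
    Forall (fun y => ~ eqv y one) l -> eqv (prodl l) x -> length l <= N.

Definition is_lcm (div : M -> M -> Prop) (U V L : M) : Prop :=
  div U L /\ div V L /\ forall L', div U L' -> div V L' -> div L L'.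

Definition gaussian : Prop :=
  atomic /\ cancellative /\
  (forall U V, exists L, is_lcm ldiv U V L) /\
  (forall U V, exists L, is_lcm rdiv U V L).

End Gaussian.

Inductive gen := ga | gb | gc.

(* letters of group words: (generator, true) = generator, (generator, false) = inverse *)
Definition letter := (gen * bool)%type.
Definition gword := list letter.

Definition pos (w : list gen) : gword := map (fun g => (g, true)) w.

(* The congruence on group words defining the group <a,b,c | u_i = v_i>
   (positive relators given as pairs of positive words). *)
Inductive geq (R : list (list gen * list gen)) : gword -> gword -> Prop :=
| geq_rel : forall u v, In (u, v) R -> geq R (pos u) (pos v)
| geq_inv1 : forall g b, geq R [(g, b); (g, negb b)] []
| geq_ctx : forall p q u v, geq R u v -> geq R (p ++ u ++ q) (p ++ v ++ q)
| geq_refl : forall u, geq R u u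
| geq_sym : forall u v, geq R u v -> geq R v u
| geq_trans : forall u v w, geq R u v -> geq R v w -> geq R u w.

(* G^+ : the submonoid of the group generated by a, b, c.  Its elements are
   the group elements represented by positive words; equality is equality
   in the group. *)
Definition Gplus_eqv (R : list (list gen * list gen)) (u v : list gen) : Prop :=
  geq R (pos u) (pos v).
Definition Gplus_mul (u v : list gen) : list gen := u ++ v.
Definition Gplus_one : list gen := [].

Definition Gplus_gaussian (R : list (list gen * list gen)) : Prop :=
  gaussian (list gen) (Gplus_eqv R) Gplus_mul Gplus_one.

Inductive case := B_ii | B_vi | H_ii | H_iii.

Definition rels (X : case) : list (list gen * list gen) :=
  match X with
  | B_ii  => [([ga;gb;ga;gb;ga;gb], [gb;ga;gb;ga;gb;ga]);
              ([gb;gc], [ga;gb]);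
              ([ga;gc], [gc;ga])]
  | B_vi  => [([ga;gb;ga], [gb;ga;gb]);
              ([ga;gc;ga], [gb;ga;gc]);
              ([ga;gc;ga;gc;ga], [gc;ga;gc;ga;gc])]
  | H_ii  => [([ga;gb;ga;gb], [gb;ga;gb;ga]);
              ([ga;gc;ga], [gb;ga;gc]);
              ([ga;gc;ga;gc;ga], [gc;ga;gc;ga;gc])]
  | H_iii => [([ga;gb;ga], [gb;ga;gb]);
              ([gb;gc;gb;ga], [gc;gb;ga;gc]);
              ([gc;gb;ga], [ga;gc;gb])]
  end.

From Stdlib Require Import List Arith Lia ZArith Bool.
Import ListNotations.

(* The lcm axiom fails: for suitable generators U, V we exhibit two common multiples P, Q (of U and V on the same side) such that
   no common multiple L of U and V divides both.  Since the presentations are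
   homogeneous, such an L has length at most |P|, so only finitely many words
   need to be excluded; each is excluded by mapping G_X onto a finite
   permutation group, where divisibility becomes decidable and is checked by
   computation.  All equalities needed in G_X itself come from rewriting with
   the relations, plus one cancellation for B_ii. *)

Notation Gplus_ldiv R := (ldiv (list gen) (Gplus_eqv R) Gplus_mul).
Notation Gplus_rdiv R := (rdiv (list gen) (Gplus_eqv R) Gplus_mul).

Lemma pos_app (u v : list gen) : pos (u ++ v) = pos u ++ pos v.
Proof. apply map_app. Qed.

Lemma geq_app R u u' v v' : geq R u u' -> geq R v v' -> geq R (u ++ v) (u' ++ v').
Proof.
  intros Hu Hv. apply geq_trans with (u' ++ v).
  - exact (geq_ctx R [] v u u' Hu).
  - pose proof (geq_ctx R u' [] v v' Hv) as H. rewrite !app_nil_r in H. exact H.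
Qed.

Lemma geq_cancel_letter_l R x u v :
  geq R ((x, true) :: u) ((x, true) :: v) -> geq R u v.
Proof.
  intros H.
  assert (Hinv : forall w, geq R ((x, false) :: (x, true) :: w) w)
    by (intro w; exact (geq_ctx R [] w _ _ (geq_inv1 R x false))).
  pose proof (geq_ctx R [(x, false)] [] _ _ H) as H'. rewrite !app_nil_r in H'.
  apply geq_trans with ((x, false) :: (x, true) :: u); [apply geq_sym, Hinv|].
  apply geq_trans with ((x, false) :: (x, true) :: v); [exact H' | apply Hinv].
Qed.

Lemma geq_cancel_letter_r R x u v :
  geq R (u ++ [(x, true)]) (v ++ [(x, true)]) -> geq R u v.
Proof.
  intros H.
  assert (Hinv : forall w, geq R (w ++ [(x, true); (x, false)]) w).
  { intro w. pose proof (geq_ctx R w [] _ _ (geq_inv1 R x true)) as H0.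
    rewrite !app_nil_r in H0. exact H0. }
  pose proof (geq_ctx R [] [(x, false)] _ _ H) as H'. simpl in H'.
  rewrite <- !app_assoc in H'.
  apply geq_trans with (u ++ [(x, true); (x, false)]); [apply geq_sym, Hinv|].
  apply geq_trans with (v ++ [(x, true); (x, false)]); [exact H' | apply Hinv].
Qed.

Lemma geq_cancel_l R p u v : geq R (pos p ++ u) (pos p ++ v) -> geq R u v.
Proof.
  induction p as [|x p IH]; intro H; [exact H|].
  apply IH, (geq_cancel_letter_l R x), H.
Qed.

Lemma geq_cancel_r R q u v : geq R (u ++ pos q) (v ++ pos q) -> geq R u v.
Proof.
  revert u v. induction q as [|x q IH]; intros u v H.
  - rewrite !app_nil_r in H. exact H.
  - apply (geq_cancel_letter_r R x), IH. rewrite <- !app_assoc. exact H.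
Qed.

Definition homogeneous (R : list (list gen * list gen)) : bool :=
  forallb (fun uv => length (fst uv) =? length (snd uv)) R.

Fixpoint exponent_sum (w : gword) : Z :=
  match w with
  | [] => 0
  | (_, true) :: w' => exponent_sum w' + 1
  | (_, false) :: w' => exponent_sum w' - 1
  end%Z.

Lemma exponent_sum_app u v : exponent_sum (u ++ v) = (exponent_sum u + exponent_sum v)%Z.
Proof. induction u as [|[g [|]] u IH]; cbn [exponent_sum app]; rewrite ?IH; lia. Qed.

Lemma exponent_sum_pos w : exponent_sum (pos w) = Z.of_nat (length w).
Proof. induction w as [|g w IH]; cbn [exponent_sum pos map length]; [|fold (pos w); rewrite IH]; lia. Qed.

Lemma geq_exponent_sum R u v :
  homogeneous R = true -> geq R u v -> exponent_sum u = exponent_sum v.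
Proof.
  intros Hhom H. induction H as [u v Huv| g [|] | p q u v _ IH | | | ]; try congruence.
  - unfold homogeneous in Hhom. rewrite forallb_forall in Hhom.
    apply Hhom, Nat.eqb_eq in Huv. simpl in Huv.
    rewrite !exponent_sum_pos, Huv. reflexivity.
  - reflexivity.
  - reflexivity.
  - rewrite !exponent_sum_app, IH. reflexivity.
Qed.

Lemma Gplus_eqv_length R u v :
  homogeneous R = true -> Gplus_eqv R u v -> length u = length v.
Proof.
  intros Hhom H. apply (geq_exponent_sum R) in H; [|exact Hhom].
  rewrite !exponent_sum_pos in H. lia.
Qed.

Lemma ldiv_length R U L :
  homogeneous R = true -> Gplus_ldiv R U L ->
  length U <= length L.
Proof.
  intros Hhom [W H]. apply Gplus_eqv_length in H; [|exact Hhom].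
  unfold Gplus_mul in H. rewrite length_app in H. lia.
Qed.

Lemma rdiv_length R U L :
  homogeneous R = true -> Gplus_rdiv R U L ->
  length U <= length L.
Proof.
  intros Hhom [W H]. apply Gplus_eqv_length in H; [|exact Hhom].
  unfold Gplus_mul in H. rewrite length_app in H. lia.
Qed.

Definition gen_eq_dec (x y : gen) : {x = y} + {x <> y}.
Proof. decide equality. Defined.

Definition words_eqb (u v : list gen) : bool :=
  if list_eq_dec gen_eq_dec u v then true else false.

Lemma words_eqb_eq u v : words_eqb u v = true -> u = v.
Proof. unfold words_eqb. destruct list_eq_dec; congruence. Qed.

Definition replaces_at (u v w1 w2 : list gen) (i : nat) : bool :=
  words_eqb (firstn (length u) (skipn i w1)) u &&
  words_eqb w2 (firstn i w1 ++ v ++ skipn (length u) (skipn i w1)).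

Definition rewrite_step R (w1 w2 : list gen) : bool :=
  existsb (fun i => existsb (fun uv =>
      replaces_at (fst uv) (snd uv) w1 w2 i || replaces_at (snd uv) (fst uv) w1 w2 i) R)
    (seq 0 (S (length w1))).

Fixpoint rewrite_chain R (w1 w2 : list gen) (ws : list (list gen)) : bool :=
  match ws with
  | [] => rewrite_step R w1 w2
  | w :: ws' => rewrite_step R w1 w && rewrite_chain R w w2 ws'
  end.

Lemma replaces_at_sound R u v w1 w2 i :
  In (u, v) R \/ In (v, u) R -> replaces_at u v w1 w2 i = true ->
  Gplus_eqv R w1 w2.
Proof.
  intros Hin H. apply andb_true_iff in H as [Hu Hw2].
  apply words_eqb_eq in Hu. apply words_eqb_eq in Hw2.
  assert (Hw1 : w1 = firstn i w1 ++ u ++ skipn (length u) (skipn i w1)).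
  { rewrite <- (firstn_skipn i w1) at 1. f_equal.
    rewrite <- (firstn_skipn (length u) (skipn i w1)) at 1. rewrite Hu. reflexivity. }
  unfold Gplus_eqv. rewrite Hw1, Hw2, !pos_app.
  apply geq_ctx. destruct Hin as [Hin|Hin].
  - apply geq_rel, Hin.
  - apply geq_sym, geq_rel, Hin.
Qed.

Lemma rewrite_step_sound R w1 w2 : rewrite_step R w1 w2 = true -> Gplus_eqv R w1 w2.
Proof.
  intro H. apply existsb_exists in H as [i [_ H]].
  apply existsb_exists in H as [[u v] [Hin H]].
  apply orb_true_iff in H as [H|H].
  - exact (replaces_at_sound R u v w1 w2 i (or_introl Hin) H).
  - exact (replaces_at_sound R v u w1 w2 i (or_intror Hin) H).
Qed.

Lemma rewrite_chain_sound R w1 w2 ws : rewrite_chain R w1 w2 ws = true -> Gplus_eqv R w1 w2.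
Proof.
  revert w1. induction ws as [|w ws IH]; intros w1 H; [exact (rewrite_step_sound R w1 w2 H)|].
  apply andb_true_iff in H as [H1 H2].
  exact (geq_trans R _ _ _ (rewrite_step_sound R w1 w H1) (IH w H2)).
Qed.

(* A representation on the points [0 .. rep_size - 1] given by the tables of
   the images of the generators and of their inverses; points outside a table
   are fixed. *)
Record perm_rep := PermRep {
  rep_size : nat;
  rep_gen : gen -> list nat;
  rep_inv : gen -> list nat }.

Definition act_letter (rho : perm_rep) (l : letter) (x : nat) : nat :=
  nth x (if snd l then rep_gen rho (fst l) else rep_inv rho (fst l)) x.

Definition act (rho : perm_rep) (w : gword) (x : nat) : nat :=
  fold_left (fun y l => act_letter rho l y) w x.

Lemma act_app rho u v x : act rho (u ++ v) x = act rho v (act rho u x).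
Proof. apply fold_left_app. Qed.

Definition rep_bounded (rho : perm_rep) : bool :=
  forallb (fun g => (length (rep_gen rho g) <=? rep_size rho) &&
                    (length (rep_inv rho g) <=? rep_size rho)) [ga; gb; gc].

Lemma act_outside rho w x : rep_bounded rho = true -> rep_size rho <= x -> act rho w x = x.
Proof.
  intros Hb Hx. induction w as [|[g s] w IH] using rev_ind; [reflexivity|].
  rewrite act_app, IH. unfold act, act_letter; simpl. apply nth_overflow.
  unfold rep_bounded in Hb. rewrite forallb_forall in Hb.
  assert (Hg : In g [ga; gb; gc]) by (destruct g; simpl; auto).
  apply Hb, andb_true_iff in Hg as [H1 H2].
  apply Nat.leb_le in H1. apply Nat.leb_le in H2. destruct s; simpl; lia.
Qed.

Definition same_action (rho : perm_rep) (u v : gword) : bool :=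
  forallb (fun x => act rho u x =? act rho v x) (seq 0 (rep_size rho)).

Lemma same_action_sound rho u v :
  rep_bounded rho = true -> same_action rho u v = true -> forall x, act rho u x = act rho v x.
Proof.
  intros Hb H x. destruct (Nat.lt_ge_cases x (rep_size rho)) as [Hx|Hx].
  - unfold same_action in H. rewrite forallb_forall in H.
    apply Nat.eqb_eq, H, in_seq. lia.
  - rewrite !act_outside; auto.
Qed.

Definition respects (rho : perm_rep) (R : list (list gen * list gen)) : bool :=
  rep_bounded rho &&
  forallb (fun uv => same_action rho (pos (fst uv)) (pos (snd uv))) R &&
  forallb (fun g => same_action rho [(g, true); (g, false)] [] &&
                    same_action rho [(g, false); (g, true)] []) [ga; gb; gc].

Lemma act_geq rho R u v :
  respects rho R = true -> geq R u v -> forall x, act rho u x = act rho v x.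
Proof.
  intros Hresp H. unfold respects in Hresp.
  apply andb_true_iff in Hresp as [Hresp Hinv]. apply andb_true_iff in Hresp as [Hb Hrel].
  rewrite forallb_forall in Hrel, Hinv.
  induction H as [u v Huv| g b | p q u v _ IH | | u v _ IH | u v w _ IH1 _ IH2]; intro x.
  - exact (same_action_sound rho _ _ Hb (Hrel _ Huv) x).
  - assert (Hg : In g [ga; gb; gc]) by (destruct g; simpl; auto).
    apply Hinv, andb_true_iff in Hg as [H1 H2].
    destruct b; eapply same_action_sound; eauto.
  - rewrite !act_app, IH. reflexivity.
  - reflexivity.
  - symmetry. apply IH.
  - rewrite IH1. apply IH2.
Qed.

Lemma same_action_complete rho R u v :
  respects rho R = true -> Gplus_eqv R u v -> same_action rho (pos u) (pos v) = true.
Proof.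
  intros Hresp H. apply forallb_forall. intros x _.
  apply Nat.eqb_eq. exact (act_geq rho R _ _ Hresp H x).
Qed.

Fixpoint words (k : nat) : list (list gen) :=
  match k with
  | 0 => [[]]
  | S k => flat_map (fun w => [ga :: w; gb :: w; gc :: w]) (words k)
  end.

Definition words_upto (k : nat) : list (list gen) := flat_map words (seq 0 (S k)).

Lemma in_words w : In w (words (length w)).
Proof.
  induction w as [|g w IH]; simpl; [auto|].
  apply in_flat_map. exists w. split; [exact IH|]. destruct g; simpl; auto.
Qed.

Lemma in_words_upto w k : length w <= k -> In w (words_upto k).
Proof.
  intro Hk. apply in_flat_map. exists (length w). split; [apply in_seq; lia | apply in_words].
Qed.

Definition ldivb (rho : perm_rep) (U L : list gen) : bool :=
  existsb (fun W => same_action rho (pos (U ++ W)) (pos L)) (words (length L - length U)).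

Definition rdivb (rho : perm_rep) (U L : list gen) : bool :=
  existsb (fun W => same_action rho (pos (W ++ U)) (pos L)) (words (length L - length U)).

Lemma ldivb_complete rho R U L :
  homogeneous R = true -> respects rho R = true ->
  Gplus_ldiv R U L -> ldivb rho U L = true.
Proof.
  intros Hhom Hresp [W H]. apply existsb_exists. exists W. split.
  - apply Gplus_eqv_length in H; [|exact Hhom]. unfold Gplus_mul in H.
    rewrite length_app in H. replace (length L - length U) with (length W) by lia.
    apply in_words.
  - apply (same_action_complete rho R); [exact Hresp|]. apply geq_sym, H.
Qed.

Lemma rdivb_complete rho R U L :
  homogeneous R = true -> respects rho R = true ->
  Gplus_rdiv R U L -> rdivb rho U L = true.
Proof.
  intros Hhom Hresp [W H]. apply existsb_exists. exists W. split.
  - apply Gplus_eqv_length in H; [|exact Hhom]. unfold Gplus_mul in H.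
    rewrite length_app in H. replace (length L - length U) with (length W) by lia.
    apply in_words.
  - apply (same_action_complete rho R); [exact Hresp|]. apply geq_sym, H.
Qed.

Definition lcm_obstruction (divb : list gen -> list gen -> bool) (U V P Q : list gen) : bool :=
  forallb (fun L => negb (divb U L && divb V L && divb L P && divb L Q))
    (words_upto (length P)).

Lemma no_lcm_of_obstruction (div : list gen -> list gen -> Prop) divb U V P Q :
  (forall x y, div x y -> divb x y = true) ->
  (forall x y, div x y -> length x <= length y) ->
  lcm_obstruction divb U V P Q = true ->
  div U P -> div V P -> div U Q -> div V Q ->
  ~ exists L, is_lcm (list gen) div U V L.
Proof.
  intros Hdivb Hlen Hobs HUP HVP HUQ HVQ [L [HUL [HVL Hmin]]].
  pose proof (Hmin P HUP HVP) as HLP. pose proof (Hmin Q HUQ HVQ) as HLQ.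
  unfold lcm_obstruction in Hobs. rewrite forallb_forall in Hobs.
  specialize (Hobs L (in_words_upto L _ (Hlen _ _ HLP))).
  rewrite !Hdivb in Hobs by assumption. discriminate.
Qed.

Lemma no_left_lcm R rho U V P Q :
  homogeneous R = true -> respects rho R = true ->
  lcm_obstruction (ldivb rho) U V P Q = true ->
  Gplus_ldiv R U P -> Gplus_ldiv R V P ->
  Gplus_ldiv R U Q -> Gplus_ldiv R V Q ->
  ~ exists L, is_lcm (list gen) (Gplus_ldiv R) U V L.
Proof.
  intros Hhom Hresp. apply no_lcm_of_obstruction.
  - intros x y. apply (ldivb_complete rho R); assumption.
  - intros x y. apply ldiv_length, Hhom.
Qed.

Lemma no_right_lcm R rho U V P Q :
  homogeneous R = true -> respects rho R = true ->
  lcm_obstruction (rdivb rho) U V P Q = true ->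
  Gplus_rdiv R U P -> Gplus_rdiv R V P ->
  Gplus_rdiv R U Q -> Gplus_rdiv R V Q ->
  ~ exists L, is_lcm (list gen) (Gplus_rdiv R) U V L.
Proof.
  intros Hhom Hresp. apply no_lcm_of_obstruction.
  - intros x y. apply (rdivb_complete rho R); assumption.
  - intros x y. apply rdiv_length, Hhom.
Qed.

Lemma not_gaussian_of_no_left_lcm R U V :
  ~ (exists L, is_lcm (list gen) (Gplus_ldiv R) U V L) ->
  ~ Gplus_gaussian R.
Proof. intros Hno [_ [_ [Hl _]]]. exact (Hno (Hl U V)). Qed.

Lemma not_gaussian_of_no_right_lcm R U V :
  ~ (exists L, is_lcm (list gen) (Gplus_rdiv R) U V L) ->
  ~ Gplus_gaussian R.
Proof. intros Hno [_ [_ [_ Hr]]]. exact (Hno (Hr U V)). Qed.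

(* In B_ii the element cbb = bba is not reached by rewriting positive words;
   it follows from (ba)(cbb)c = (ba)(bba)c by cancelling. *)
Lemma Bii_cbb : Gplus_eqv (rels B_ii) [gc; gb; gb] [gb; gb; ga].
Proof.
  pose proof (rewrite_chain_sound (rels B_ii) [gb; ga; gc; gb; gb; gc] [gb; ga; gb; gb; ga; gc]
    [[gb; ga; gc; gb; ga; gb]; [gb; gc; ga; gb; ga; gb]; [ga; gb; ga; gb; ga; gb];
     [gb; ga; gb; ga; gb; ga]; [gb; ga; gb; gb; gc; ga]] eq_refl) as H.
  change (geq (rels B_ii) (pos [gb; ga] ++ (pos [gc; gb; gb] ++ pos [gc]))
                          (pos [gb; ga] ++ (pos [gb; gb; ga] ++ pos [gc]))) in H.
  apply geq_cancel_l, (geq_cancel_r _ [gc]) in H. exact H.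
Qed.

Lemma Bii_cabb : Gplus_eqv (rels B_ii) [gc; ga; gb; gb] [gb; gc; gb; ga].
Proof.
  apply geq_trans with (pos [ga; gc; gb; gb]); [apply rewrite_step_sound; reflexivity|].
  apply geq_trans with (pos [ga; gb; gb; ga]).
  - exact (geq_app _ (pos [ga]) (pos [ga]) _ _ (geq_refl _ _) Bii_cbb).
  - apply rewrite_step_sound; reflexivity.
Qed.

Definition rep_Bii : perm_rep := PermRep 24
  (fun g => match g with
   | ga => [1; 0; 3; 2; 5; 4; 7; 6; 10; 11; 8; 9; 14; 15; 12; 13; 20; 21; 22; 23; 16; 17; 18; 19]
   | gb => [9; 8; 11; 10; 13; 12; 15; 14; 18; 19; 16; 17; 22; 23; 20; 21; 4; 5; 6; 7; 0; 1; 2; 3]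
   | gc => [4; 5; 6; 7; 0; 1; 2; 3; 9; 8; 11; 10; 13; 12; 15; 14; 18; 19; 16; 17; 22; 23; 20; 21]
   end)
  (fun g => match g with
   | ga => [1; 0; 3; 2; 5; 4; 7; 6; 10; 11; 8; 9; 14; 15; 12; 13; 20; 21; 22; 23; 16; 17; 18; 19]
   | gb => [20; 21; 22; 23; 16; 17; 18; 19; 1; 0; 3; 2; 5; 4; 7; 6; 10; 11; 8; 9; 14; 15; 12; 13]
   | gc => [4; 5; 6; 7; 0; 1; 2; 3; 9; 8; 11; 10; 13; 12; 15; 14; 18; 19; 16; 17; 22; 23; 20; 21]
   end).

Lemma Bii_not_gaussian : ~ Gplus_gaussian (rels B_ii).
Proof.
  apply (not_gaussian_of_no_left_lcm _ [gb] [gc]).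
  apply (no_left_lcm _ rep_Bii _ _ [gc; gb; gb] [gc; ga; gb; gb]);
    [vm_compute; reflexivity .. | | | |].
  - exists [gb; ga]. exact Bii_cbb.
  - exists [gb; gb]. apply geq_refl.
  - exists [gc; gb; ga]. exact Bii_cabb.
  - exists [ga; gb; gb]. apply geq_refl.
Qed.

Definition rep_Bvi : perm_rep := PermRep 5
  (fun g => match g with ga => [1; 2; 3; 4; 0] | gb => [2; 0; 4; 1; 3] | gc => [1; 4; 3; 0; 2] end)
  (fun g => match g with ga => [4; 0; 1; 2; 3] | gb => [1; 3; 0; 4; 2] | gc => [3; 0; 4; 2; 1] end).

Lemma Bvi_not_gaussian : ~ Gplus_gaussian (rels B_vi).
Proof.
  apply (not_gaussian_of_no_left_lcm _ [ga] [gb]).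
  apply (no_left_lcm _ rep_Bvi _ _ [ga; gb; ga] [ga; gc; ga]);
    [vm_compute; reflexivity .. | | | |].
  - exists [gb; ga]. apply geq_refl.
  - exists [ga; gb]. apply rewrite_step_sound; reflexivity.
  - exists [gc; ga]. apply geq_refl.
  - exists [ga; gc]. apply rewrite_step_sound; reflexivity.
Qed.

Definition rep_Hii : perm_rep := PermRep 5
  (fun g => match g with ga => [0; 1; 3; 4; 2] | gb => [0; 2; 3; 1; 4] | gc => [1; 2; 0; 3; 4] end)
  (fun g => match g with ga => [0; 1; 4; 2; 3] | gb => [0; 3; 1; 2; 4] | gc => [2; 0; 1; 3; 4] end).

Lemma Hii_not_gaussian : ~ Gplus_gaussian (rels H_ii).
Proof.
  apply (not_gaussian_of_no_left_lcm _ [ga] [gb]).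
  apply (no_left_lcm _ rep_Hii _ _ [ga; gc; ga] [ga; gb; ga; gb]);
    [vm_compute; reflexivity .. | | | |].
  - exists [gc; ga]. apply geq_refl.
  - exists [ga; gc]. apply rewrite_step_sound; reflexivity.
  - exists [gb; ga; gb]. apply geq_refl.
  - exists [ga; gb; ga]. apply rewrite_step_sound; reflexivity.
Qed.

Definition rep_Hiii : perm_rep := PermRep 5
  (fun g => match g with ga => [1; 2; 3; 4; 0] | gb => [2; 0; 4; 1; 3] | gc => [3; 0; 4; 2; 1] end)
  (fun g => match g with ga => [4; 0; 1; 2; 3] | gb => [1; 3; 0; 4; 2] | gc => [1; 4; 3; 0; 2] end).

Lemma Hiii_not_gaussian : ~ Gplus_gaussian (rels H_iii).
Proof.
  apply (not_gaussian_of_no_right_lcm _ [ga] [gb]).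
  apply (no_right_lcm _ rep_Hiii _ _ [ga; gb; ga] [ga; gc; gb]);
    [vm_compute; reflexivity .. | | | |].
  - exists [ga; gb]. apply geq_refl.
  - exists [gb; ga]. apply rewrite_step_sound; reflexivity.
  - exists [gc; gb]. apply rewrite_step_sound; reflexivity.
  - exists [ga; gc]. apply geq_refl.
Qed.

Theorem corollary5p1 : forall X : case, ~ Gplus_gaussian (rels X).
Proof.
  intros X; destruct X.
  - exact Bii_not_gaussian.
  - exact Bvi_not_gaussian.
  - exact Hii_not_gaussian.
  - exact Hiii_not_gaussian.
Qed.
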